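(* Let $n$ be a large positive integer, let $\sigma>0$ and $\delta>0$ be constants, let $d=\delta\left(\frac{\log n}{\log\log n}\right)^{1/3}$ (a positive integer), and let $a,b$ be integers with $0\le a<b\le \frac12 L_n\!\left(\frac13,\sigma\right)$ and $\gcd(a,b)=1$. Define $\varphi=\varphi_{a,b}:\mathbb{Z}^d\to\mathbb{Z}$ by $$\varphi\big((v_0,\ldots,v_{d-1})\big)=\sum_{i=0}^{d-1}v_i\,a^{d-i-1}b^i .$$ Then there exists a set $S\subseteq \mathbb{I}\!\left(4L_n\!\left(\frac13,\sigma\right)\right)^d$ such that $\varphi$ restricted to $S$ is a bijection from $S$ onto $\mathbb{I}(b^{d-1})$.
   Context: For $x,\alpha,c\in\mathbb{R}$, $L_x(\alpha,c)=\exp\!\big(c(\log x)^{\alpha}(\log\log x)^{1-\alpha}\big)$. For $L>0$, $\mathbb{I}(L)=\left[-\frac12 L,\frac12 L\right)\cap\mathbb{Z}$ denotes the zero-centred half-open integer interval of length $L$. *)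

From mathcomp Require Import all_boot all_order all_algebra.
From mathcomp Require Import all_classical all_reals all_analysis.
From mathcomp Require Export Rstruct.
Set Implicit Arguments. Unset Strict Implicit. Unset Printing Implicit Defensive.
Import Order.TTheory GRing.Theory Num.Theory.
Local Open Scope ring_scope.
Local Open Scope classical_set_scope.

Notation R := Rdefinitions.R.

Definition Lnx (x alpha c : R) : R :=
  expR (c * (ln x `^ alpha) * (ln (ln x) `^ (1 - alpha))).

Definition Iint (L : R) : set int :=
  [set z : int | - (L / 2) <= (z%:~R : R) /\ (z%:~R : R) < L / 2].

Definition phi (d : nat) (a b : int) (v : {ffun 'I_d -> int}) : int :=
  \sum_(i < d) v i * a ^+ (d - i - 1)%N * b ^+ i.

Definition Ibox (d : nat) (L : R) : set {ffun 'I_d -> int} :=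
  [set v | forall i : 'I_d, Iint L (v i)].
Arguments Ibox : clear implicits.

(** Since [a] is invertible modulo [b], every integer [m] with [2|m| <= b^d]
    can be written as [m = v_0 a^(d-1) + b q] with [|v_0| <= b] and
    [2|q| <= b^(d-1)]: take [v_0] in the residue class of [m a^(1-d)] modulo
    [b], either in [[0, b)] or shifted down by [b].  Recursing on [q] writes
    [m = phi_(a,b)(v)] with all [|v_i| <= b <= L/2], well inside the box, and
    choosing one such [v] for each [m] yields [S]. *)
From mathcomp Require Import all_boot all_order all_algebra.
From mathcomp Require Import all_classical all_reals all_analysis.
From mathcomp Require Import zify ring lra.

Set Implicit Arguments.
Unset Strict Implicit.
Unset Printing Implicit Defensive.
Import Order.TTheory GRing.Theory Num.Theory.
Local Open Scope ring_scope.
Local Open Scope classical_set_scope.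

Lemma coprimez_residue (A b m : int) : 0 < b -> coprimez A b ->
  exists r q : int, m = r * A + b * q /\ 0 <= r < b.
Proof.
move=> b_gt0 /eqP coAb.
have [u [w Bezout_uw]] := Bezoutz A b; rewrite coAb in Bezout_uw.
have m_eq := divz_eq (m * u) b.
set k := ((m * u) %/ b)%Z in m_eq; set r := ((m * u) %% b)%Z in m_eq *.
exists r, (k * A + m * w); split.
  by rewrite -[LHS]mulr1 -Bezout_uw mulrDr mulrA m_eq; ring.
by rewrite modz_ge0 ?ltz_pmod // gt_eqF.
Qed.

Lemma balanced_digit (A B b m : int) : 0 <= A <= B -> 0 < b -> coprimez A b ->
  2 * `|m| <= b * B ->
  exists v0 q : int, m = v0 * A + b * q /\ `|v0| <= b /\ 2 * `|q| <= B.
Proof.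
move=> /andP[A_ge0 AB] b_gt0 coAb m_le.
have [r [q [m_eq /andP[r_ge0 r_lt]]]] := coprimez_residue m b_gt0 coAb.
have rA_ge0 : 0 <= r * A by exact: mulr_ge0.
have rA_le : r * A <= b * A by rewrite ler_wpM2r // ltW.
have m_bounds : - m <= `|m| /\ m <= `|m| by rewrite ler_norm -normrN ler_norm.
have bq2 : b * (2 * q) = 2 * m - 2 * (r * A) by rewrite m_eq; ring.
have q_le : 2 * q <= B by rewrite -(ler_pM2l b_gt0) bq2; lia.
have q_ge : - B - 2 * A <= 2 * q.
  rewrite -(ler_pM2l b_gt0) bq2 mulrBr mulrN mulrCA; lia.
(* When [2q] falls below [-B], trade one [b] from the digit for one [A] in [q]. *)
have [qB | Bq] := lerP (- B) (2 * q).
  by exists r, q; split => //; split; lia.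
exists (r - b), (q + A); split; first by rewrite m_eq; ring.
split; lia.
Qed.

Lemma phi_recl (k : nat) (a b : int) (v : {ffun 'I_k.+2 -> int}) :
  phi a b v = v ord0 * a ^+ k.+1 + b * phi a b [ffun i => v (lift ord0 i)].
Proof.
rewrite /phi big_ord_recl /= subn0 subn1 /= expr0 mulr1; congr (_ + _).
rewrite mulr_sumr; apply: eq_bigr => i _.
rewrite ffunE /= /bump /= add1n subSS exprS; ring.
Qed.

Lemma phi_balanced_digits (a b : int) : 0 <= a <= b -> 0 < b -> coprimez a b ->
  forall (k : nat) (m : int), 2 * `|m| <= b ^+ k.+1 ->
  exists2 v : {ffun 'I_k.+1 -> int}, (forall i, `|v i| <= b) & phi a b v = m.
Proof.
move=> /andP[a_ge0 ab] b_gt0 coab; elim=> [|k IHk] m m_le.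
  exists [ffun=> m]; last by rewrite /phi big_ord1 ffunE expr0 !mulr1.
  by move=> i; rewrite ffunE; move: m_le; rewrite expr1; have := normr_ge0 m; lia.
have aX : 0 <= a ^+ k.+1 <= b ^+ k.+1.
  by rewrite exprn_ge0 //= lerXn2r // nnegrE // (le_trans a_ge0 ab).
have [v0 [q [m_eq [v0_le q_le]]]] :=
  balanced_digit aX b_gt0 (coprimezXl k.+1 coab) (m_le : _ <= b * _).
have [v v_le phi_v] := IHk q q_le.
exists [ffun i => if unlift ord0 i is Some j then v j else v0].
  by move=> i; rewrite ffunE; case: unliftP.
rewrite phi_recl ffunE unlift_none m_eq -phi_v; congr (_ + b * phi _ _ _).
by apply/ffunP => i; rewrite !ffunE liftK.
Qed.

Lemma Iint_norm_le (n m : int) : Iint n%:~R m -> 2 * `|m| <= n.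
Proof.
case=> m_ge m_lt.
have : - n <= 2 * m by rewrite -(ler_int R) intrN intrM; lra.
have : 2 * m <= n by rewrite -(ler_int R) intrM; lra.
have := ler_norm m; have := ler_norm (- m); rewrite normrN; lia.
Qed.

Lemma Iint_norm_lt (L : R) (z : int) : 2 * `|z%:~R| < L -> Iint L z.
Proof.
have := ler_norm (z%:~R : R); have := ler_norm (- z%:~R : R).
by rewrite normrN /Iint /=; split; lra.
Qed.

Lemma exists_section (U V : Type) (A : set U) (B : set V) (g : U -> V) :
  (forall y, B y -> exists2 x, A x & g x = y) ->
  exists S : set U, S `<=` A /\ (forall x, S x -> B (g x)) /\
    (forall x x', S x -> S x' -> g x = g x' -> x = x') /\
    (forall y, B y -> exists2 x, S x & g x = y).
Proof.
move=> g_onto.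
have /boolp.choice [f f_sec] : forall y : {y | B y}, exists x, A x /\ g x = sval y.
  by move=> [y By]; have [x] := g_onto y By; exists x.
exists (range f); split; [|split; [|split]].
- by move=> _ [y _ <-]; case: (f_sec y).
- by move=> _ [y _ <-]; rewrite (f_sec y).2; exact: svalP.
- move=> _ _ [[y By] _ <-] [[y' By'] _ <-]; rewrite (f_sec _).2 (f_sec _).2 /=.
  by move=> yy'; congr f; exact: boolp.eq_exist.
- move=> y By; exists (f (exist _ y By)); first by exists (exist _ y By).
  by rewrite (f_sec _).2.
Qed.

Theorem lemma5p6 (sigma delta : R) :
  0 < sigma -> 0 < delta ->
  exists N : nat, forall n : nat, (N <= n)%N ->
  forall d : nat, (0 < d)%N ->
  (d%:R : R) = delta * (ln (n%:R : R) / ln (ln (n%:R : R))) `^ (3^-1) ->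
  forall a b : int, 0 <= a -> a < b ->
  (b%:~R : R) <= Lnx n%:R (3^-1) sigma / 2 ->
  gcdz a b = 1 ->
  exists S : set {ffun 'I_d -> int},
    S `<=` Ibox d (4 * Lnx n%:R (3^-1) sigma) /\
    (forall v, S v -> Iint ((b ^+ d.-1)%:~R) (phi a b v)) /\
    (forall v w, S v -> S w -> phi a b v = phi a b w -> v = w) /\
    (forall m, Iint ((b ^+ d.-1)%:~R) m -> exists2 v, S v & phi a b v = m).
Proof.
move=> _ _; exists 0%N => n _ [//|k] _ _ a b a_ge0 ab bL gcd_ab.
set L := Lnx _ _ _ in bL *.
have a_le_b : 0 <= a <= b by rewrite a_ge0 ltW.
have b_gt0 : 0 < b by lia.
have b_ge1 : 1 <= b by lia.
have coab : coprimez a b by rewrite /coprimez gcd_ab.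
apply: exists_section => m /Iint_norm_le m_le.
have [v v_le phi_v] := phi_balanced_digits a_le_b b_gt0 coab
  (le_trans m_le (ler_weXn2l b_ge1 (leqnSn k))).
exists v => // i; apply: Iint_norm_lt.
have : `|(v i)%:~R| <= b%:~R :> R by rewrite -intr_norm ler_int.
have : 1 <= b%:~R :> R by rewrite ler1z.
lra.
Qed.
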